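(* Let $C\in\mathbb{R}^{m\times n}$ with $\operatorname{rank}(C)=c$ and $M\in\mathcal{M}_{m\times n}(\mathbb{R})$ with $\operatorname{rank}(M)=k$, and suppose $C=M+\sum_{i=1}^{c-k}\mathbf{r}_i\mathbf{c}_i^\mathsf{T}$ for some $\mathbf{r}_i\in\mathbb{R}^m$, $\mathbf{c}_i\in\mathbb{R}^n$. Then: (1) If $k=2$, then $\mathbf{1}_m\in\operatorname{span}(C)$ and $\mathbf{1}_n\in\operatorname{span}(C^\mathsf{T})$; moreover every $\mathbf{x}\in\mathbb{R}^n$ with $C\mathbf{x}=\mathbf{1}_m$ satisfies $\mathbf{1}_n^\mathsf{T}\mathbf{x}=0$, and every $\mathbf{y}\in\mathbb{R}^m$ with $C^\mathsf{T}\mathbf{y}=\mathbf{1}_n$ satisfies $\mathbf{1}_m^\mathsf{T}\mathbf{y}=0$. (2) If $k=1$, then $\mathbf{1}_m\in\operatorname{span}(C)$ or $\mathbf{1}_n\in\operatorname{span}(C^\mathsf{T})$ (or both).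
   Context: $\mathbf{1}_k$ is the all-ones vector of length $k$. $\operatorname{span}(C)$ denotes the column space of $C$. $\mathcal{M}_{m\times n}(\mathbb{R})=\{M\in\mathbb{R}^{m\times n}: M=\mathbf{1}_m\mathbf{u}^\mathsf{T}+\mathbf{v}\mathbf{1}_n^\mathsf{T}\text{ for some }\mathbf{u}\in\mathbb{R}^n,\mathbf{v}\in\mathbb{R}^m\}$. *)

From HB Require Import structures.
From mathcomp Require Import all_boot all_order all_algebra.
Set Implicit Arguments. Unset Strict Implicit. Unset Printing Implicit Defensive.
Import Order.TTheory GRing.Theory Num.Theory.
Local Open Scope ring_scope.

Definition in_Mclass (R : nzRingType) (m n : nat) (A : 'M[R]_(m, n)) : Prop :=
  exists (u : 'rV[R]_n) (v : 'cV[R]_m),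
    A = (const_mx 1 : 'cV[R]_m) *m u + v *m (const_mx 1 : 'rV[R]_n).

From HB Require Import structures.
From mathcomp Require Import all_boot all_order all_algebra.
From mathcomp Require Import zify.
Import Order.TTheory GRing.Theory Num.Theory.
Local Open Scope ring_scope.
Set Implicit Arguments. Unset Strict Implicit.

(* Write S := \sum_i r_i c_i^T, so C = M + S and rank S <= c - k;
   subadditivity of the rank then forces rank C = rank M + rank S, i.e. the
   row spaces of M and S form a direct sum inside the row space of C (and
   likewise for C^T = M^T + S^T).
   A matrix M = 1_m u + v 1_n^T of the class factors as [1_m v] * [u; 1_n^T].
   - If rank M = 2, the factor [u; 1_n^T] is row-free with the same row space
     as M, so 1_n^T lies in the row space of M, hence of C.  If y^T C = 1_n^T,
     then y^T S = 1_n^T - y^T M lies in rowspace(M) /\ rowspace(S) = 0, so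
     y^T M = [y^T 1_m, y^T v] [u; 1_n^T] = [0, 1] [u; 1_n^T], and row-freeness
     gives y^T 1_m = 0.  The statements about C^T follow by transposition.
   - If rank M = 1, either [u; 1_n^T] has rank 1 (then 1_n^T spans the row
     space of M), or it is row-free and [1_m v] has rank 1 (then 1_m^T spans
     the row space of M^T); in both cases we conclude through M <= C. *)

Section RankAdditivity.

Variable F : fieldType.

Lemma mxrank_sum_leq m n p (A : 'I_p -> 'M[F]_(m, n)) :
  (\rank (\sum_(i < p) A i)%R <= \sum_(i < p) \rank (A i))%N.
Proof.
elim/big_ind2: _ => [|a X b Y hX hY|i _]; first by rewrite mxrank0.
  exact: leq_trans (mxrank_add X Y) (leq_add hX hY).
by [].
Qed.

Lemma mxrank_outer_sum_leq m n p (r : 'I_p -> 'cV[F]_m) (c : 'I_p -> 'cV[F]_n) :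
  (\rank (\sum_(i < p) r i *m (c i)^T)%R <= p)%N.
Proof.
apply: leq_trans (mxrank_sum_leq _) _.
rewrite -[X in (_ <= X)%N]card_ord -sum1_card leq_sum // => i _.
exact: leq_trans (mxrankM_maxl _ _) (rank_leq_col _).
Qed.

Lemma mxrank_add_eq m n (A B : 'M[F]_(m, n)) :
  (\rank B <= \rank (A + B)%R - \rank A)%N ->
  \rank (A + B)%R = (\rank A + \rank B)%N.
Proof.
move=> hB; have hAB := mxrank_add A B.
have hA : (\rank A <= \rank (A + B)%R + \rank B)%N.
  by move: (mxrank_add (A + B) (- B)); rewrite addrK mxrank_opp.
lia.
Qed.

Lemma mxrank_add_direct m n (A B : 'M[F]_(m, n)) :
  \rank (A + B)%R = (\rank A + \rank B)%N ->
  (A <= (A + B)%R)%MS /\ (A :&: B <= (0 : 'M_n))%MS.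
Proof.
move=> rAB.
have sAB : ((A + B)%R <= (A + B)%MS)%MS by apply: addmx_sub_adds.
have [le_sum_add direct] := mxrank_adds_leqif A B.
have rS : \rank (A + B)%MS = (\rank A + \rank B)%N.
  by apply/eqP; rewrite eqn_leq le_sum_add -rAB mxrankS.
have sBA : ((A + B)%MS <= (A + B)%R)%MS.
  by rewrite -(mxrank_leqif_sup sAB).2 rAB rS.
by rewrite -direct rS eqxx (submx_trans _ sBA) ?addsmxSl.
Qed.

Lemma direct_component_eq0 m p n (A B : 'M[F]_(m, n)) (w : 'M[F]_(p, m)) :
  \rank (A + B)%R = (\rank A + \rank B)%N ->
  (w *m (A + B)%R <= A)%MS -> w *m B = 0.
Proof.
move=> rAB swA; have [_ direct] := mxrank_add_direct rAB.
apply/eqP; rewrite -submx0; apply: submx_trans direct.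
rewrite sub_capmx submxMl andbT.
have -> : w *m B = w *m (A + B) - w *m A by rewrite mulmxDr addrC addKr.
by rewrite addmx_sub // eqmx_opp submxMl.
Qed.

End RankAdditivity.

Section MatrixClass.

Variable F : fieldType.

Lemma Mclass_tr m n (M : 'M[F]_(m, n)) : in_Mclass M -> in_Mclass M^T.
Proof.
move=> [u [v ->]]; exists v^T, u^T.
by rewrite linearD /= !trmx_mul !trmx_const addrC.
Qed.

(* M = 1_m u + v 1_n^T = [1_m v] [u; 1_n^T]: when the right factor has rank at
   most rank M, it has the same row space as M, which thus contains 1_n^T. *)
Lemma Mclass_rowspace m n (M : 'M[F]_(m, n)) u v :
  M = (const_mx 1 : 'cV[F]_m) *m u + v *m (const_mx 1 : 'rV[F]_n) ->
  (\rank (col_mx u (const_mx 1%R : 'rV[F]_n)) <= \rank M)%N ->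
  ((const_mx 1 : 'rV[F]_n) <= M)%MS /\
  (M == col_mx u (const_mx 1 : 'rV[F]_n))%MS.
Proof.
move=> eM rB; set B := col_mx u _.
have sMB : (M <= B)%MS by rewrite eM -mul_row_col submxMl.
have sBM : (B <= M)%MS.
  by rewrite -(mxrank_leqif_sup sMB).2 eqn_leq rB mxrankS.
split; last by rewrite sMB sBM.
by apply: submx_trans sBM; rewrite /B -addsmxE addsmxSr.
Qed.

Lemma Mclass_rank2 m n (M : 'M[F]_(m, n)) :
  in_Mclass M -> \rank M = 2%N ->
  ((const_mx 1 : 'rV[F]_n) <= M)%MS /\
  (forall w : 'rV[F]_m, w *m M = const_mx 1 -> w *m (const_mx 1 : 'cV[F]_m) = 0).
Proof.
move=> [u [v eM]] rM; set B := col_mx u (const_mx 1 : 'rV[F]_n).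
have [ones_M eqMB] : ((const_mx 1 : 'rV[F]_n) <= M)%MS /\ (M == B)%MS.
  by apply: Mclass_rowspace eM _; rewrite rM rank_leq_row.
split=> // w wM.
have freeB : row_free B by rewrite /row_free -(eqmxP eqMB) rM.
have : row_mx (w *m const_mx 1) (w *m v) *m B = row_mx 0 1 *m B.
  rewrite -mul_mx_row -mulmxA mul_row_col -eM wM.
  by rewrite mul_row_col mul0mx mul1mx add0r.
by move/(row_free_inj freeB)/eq_row_mx => [].
Qed.

Lemma Mclass_rank1 m n (M : 'M[F]_(m, n)) :
  in_Mclass M -> \rank M = 1%N ->
  ((const_mx 1 : 'rV[F]_n) <= M)%MS \/ ((const_mx 1 : 'rV[F]_m) <= M^T)%MS.
Proof.
move=> [u [v eM]] rM; set B := col_mx u (const_mx 1 : 'rV[F]_n).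
have [rB|rB] := leqP (\rank B) 1.
  by left; apply: (Mclass_rowspace eM _).1; rewrite rM.
right; apply: (@Mclass_rowspace _ _ M^T v^T u^T _ _).1.
  by rewrite eM linearD /= !trmx_mul !trmx_const addrC.
(* B is row-free, so M = [1_m v] B has the rank of [1_m v], whose transpose
   is [v^T; 1_m^T] up to the order of rows. *)
have freeB : row_free B by rewrite /row_free eqn_leq rank_leq_row.
have : \rank M = \rank (row_mx (const_mx 1 : 'cV[F]_m) v).
  by rewrite eM -mul_row_col mxrankMfree.
by rewrite mxrank_tr rM -mxrank_tr tr_row_mx trmx_const -addsmxE addsmxC addsmxE => <-.
Qed.

End MatrixClass.

Lemma direct_rank2_ones (F : fieldType) m n (M S : 'M[F]_(m, n)) :
  \rank (M + S)%R = (\rank M + \rank S)%N ->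
  in_Mclass M -> \rank M = 2%N ->
  ((const_mx 1 : 'rV[F]_n) <= (M + S)%R)%MS /\
  (forall y : 'cV[F]_m, (M + S)^T *m y = const_mx 1 ->
     (const_mx 1 : 'rV[F]_m) *m y = 0).
Proof.
move=> rMS hM rM; have [sM_MS _] := mxrank_add_direct rMS.
have [ones_M ones_orth] := Mclass_rank2 hM rM.
split=> [|y hy]; first exact: submx_trans sM_MS.
have yMS : y^T *m (M + S) = const_mx 1.
  by apply: trmx_inj; rewrite trmx_mul trmxK trmx_const.
have yS : y^T *m S = 0 by apply: direct_component_eq0 rMS _; rewrite yMS.
have yM : y^T *m M = const_mx 1 by rewrite -yMS mulmxDr yS addr0.
by apply: trmx_inj; rewrite trmx_mul trmx_const trmx0 ones_orth.
Qed.

Theorem mainTheorem11 (R : realFieldType) (m n c k : nat)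
  (C M : 'M[R]_(m, n))
  (hC : \rank C = c) (hMcl : in_Mclass M) (hM : \rank M = k)
  (r : 'I_(c - k) -> 'cV[R]_m) (cc : 'I_(c - k) -> 'cV[R]_n)
  (hdec : C = M + \sum_(i < c - k) r i *m (cc i)^T) :
  (k = 2%N ->
     ((const_mx 1 : 'rV[R]_m) <= C^T)%MS /\
     ((const_mx 1 : 'rV[R]_n) <= C)%MS /\
     (forall x : 'cV[R]_n, C *m x = const_mx 1 ->
        (const_mx 1 : 'rV[R]_n) *m x = 0) /\
     (forall y : 'cV[R]_m, C^T *m y = const_mx 1 ->
        (const_mx 1 : 'rV[R]_m) *m y = 0)) /\
  (k = 1%N ->
     ((const_mx 1 : 'rV[R]_m) <= C^T)%MS \/
     ((const_mx 1 : 'rV[R]_n) <= C)%MS).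
Proof.
set S := \sum_(i < c - k) _ in hdec; subst C.
have rMS : \rank (M + S)%R = (\rank M + \rank S)%N.
  by apply: mxrank_add_eq; rewrite hC hM mxrank_outer_sum_leq.
have rMSt : \rank (M^T + S^T)%R = (\rank M^T + \rank S^T)%N.
  by rewrite -linearD /= !mxrank_tr.
have hMt := Mclass_tr hMcl.
have rMt : \rank M^T = \rank M := mxrank_tr M.
rewrite linearD /=; split=> hk; rewrite hk in hM.
  have [ones_n orth_m] := direct_rank2_ones rMS hMcl hM.
  have [ones_m orth_n] := direct_rank2_ones rMSt hMt (etrans rMt hM).
  rewrite linearD /= in orth_m; rewrite -linearD /= trmxK in orth_n.
  by do !split.
have [sM_MS _] := mxrank_add_direct rMS.
have [sMt_MSt _] := mxrank_add_direct rMSt.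
case: (Mclass_rank1 hMcl hM) => [ones_n | ones_m].
  by right; apply: submx_trans sM_MS.
by left; apply: submx_trans sMt_MSt.
Qed.
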